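(* Let $M$ be a monoid generated by a finite set $A$, let $H$ be an $\mathcal{H}$-class of $M$, let $G=\mathcal{G}(H)$ be the Schützenberger group of $H$, and let $\Gamma(R,A)$ be the Schützenberger graph of the $\mathcal{R}$-class $R$ containing $H$. Then the left translation action of $G$ on $\Gamma(R,A)$ is by isometries and is outward proper. Moreover, the action is cocompact if and only if $R$ contains only finitely many $\mathcal{H}$-classes.
   Context: Green's relations on a monoid $M$: $x\mathcal{R}y$ iff $xM=yM$; $x\mathcal{L}y$ iff $Mx=My$; $\mathcal{H}=\mathcal{R}\cap\mathcal{L}$. For an $\mathcal{H}$-class $H$, let $\mathrm{Stab}(H)=\{s\in M:sH=H\}$ and $\sigma$ the congruence on it with $x\,\sigma\,y$ iff $xh=yh$ for all $h\in H$; the Schützenberger group is the group $\mathcal{G}(H)=\mathrm{Stab}(H)/\sigma$, acting on the $\mathcal{R}$-class $R\supseteq H$ by $(s/\sigma)\cdot r=sr$. A semimetric space is a set $X$ with $d:X\times X\to\mathbb{R}^{\ge0}\cup\{\infty\}$, $d(x,y)=0$ iff $x=y$, and the triangle inequality (no symmetry). For a directed graph $\Gamma$ with vertex set $V$, edge set $E$, source/target maps $\iota,\tau$, the semimetric space $\Gamma^*$ has point set $V\cup(E\times(0,1))$ with: $d(x,y)$ for vertices the least number of edges in a directed path ($\infty$ if none); $d((e,\mu),y)=(1-\mu)+d(\tau(e),y)$; $d(x,(e,\mu))=d(x,\iota(e))+\mu$; $d((e,\mu),(f,\nu))=\nu-\mu$ if $e=f$, $\nu\ge\mu$, else $d(\tau(e),\iota(f))+(1-\mu)+\nu$.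 The Schützenberger graph $\Gamma(R,A)$ is $\Delta^*$ where $\Delta$ has vertex set $R$ and an edge labelled $a$ from $x$ to $y$ whenever $x,y\in R$, $a\in A$, $xa=y$. The left translation action of $G$ on $\Gamma(R,A)$ sends a vertex $r$ to $gr$, the edge labelled $a$ from $x$ to $xa$ to the edge labelled $a$ from $gx$ to $gxa$, and a point $(e,\mu)$ to $(ge,\mu)$. Out-ball $\overrightarrow{\mathcal{B}}_r(x_0)=\{y:d(x_0,y)\le r\}$, in-ball $\overleftarrow{\mathcal{B}}_r(x_0)=\{y:d(y,x_0)\le r\}$, strong ball $\mathcal{B}_r(x_0)=\overrightarrow{\mathcal{B}}_r(x_0)\cap\overleftarrow{\mathcal{B}}_r(x_0)$. An action by isometries is outward proper if for every out-ball $B$ of finite radius $\{g:B\cap gB\neq\varnothing\}$ is finite, and cocompact if there is a strong ball $B$ of finite radius with $\{gB:g\in G\}$ covering the space. *)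

From Stdlib Require Import Reals List ClassicalEpsilon.
From Coquelicot Require Import Coquelicot.
Open Scope R_scope.

Record monoid := Monoid {
  mcar :> Type;
  mmul : mcar -> mcar -> mcar;
  mone : mcar;
  mmulA : forall x y z, mmul x (mmul y z) = mmul (mmul x y) z;
  mmul1m : forall x, mmul mone x = x;
  mmulm1 : forall x, mmul x mone = x }.

Section Green.
Variable M : monoid.

Definition generated_by (A : list M) : Prop :=
  forall x : M, exists l : list M,
    (forall a, In a l -> In a A) /\ x = fold_right (mmul M) (mone M) l.

(* Green's relations: x R y iff xM = yM ; x L y iff Mx = My ; H = R /\ L *)
Definition Rrel (x y : M) : Prop :=
  forall z, (exists m, z = mmul M x m) <-> (exists m, z = mmul M y m).
Definition Lrel (x y : M) : Prop :=
  forall z, (exists m, z = mmul M m x) <-> (exists m, z = mmul M m y).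
Definition Hrel (x y : M) : Prop := Rrel x y /\ Lrel x y.

Definition is_Hclass (H : M -> Prop) : Prop :=
  exists h0, forall x, H x <-> Hrel x h0.

Definition Rclass_containing (H Rc : M -> Prop) : Prop :=
  exists h, H h /\ forall x, Rc x <-> Rrel x h.

Definition Stab (H : M -> Prop) (s : M) : Prop :=
  forall z, (exists h, H h /\ z = mmul M s h) <-> H z.

(* the congruence sigma on Stab(H): x sigma y iff xh = yh for all h in H;
   the Schutzenberger group G(H) = Stab(H)/sigma; its elements are
   represented below by elements of Stab(H), two representatives denoting
   the same group element iff they are sigma-related. *)
Definition sigma (H : M -> Prop) (s t : M) : Prop :=
  forall h, H h -> mmul M s h = mmul M t h.

Variables (Rc : M -> Prop) (A : list M).

(* the edge labelled a from x to xa (edges are determined by (x,a)) *)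
Definition edge (x a : M) : Prop := Rc x /\ In a A /\ Rc (mmul M x a).

Inductive walk : M -> M -> nat -> Prop :=
| walk0 x : Rc x -> walk x x 0
| walkS x a y n : edge x a -> walk (mmul M x a) y n -> walk x y (S n).

(* vertex distance: least number of edges of a directed path (+oo if none) *)
Definition dV (x y : M) : Rbar :=
  Glb_Rbar (fun r => exists n, walk x y n /\ r = INR n).

(* points of Delta^* : vertices, and (e, mu) with e the edge (x,a) *)
Inductive point : Type :=
| Vert (x : M)
| Mid (x a : M) (mu : R).

Definition in_space (p : point) : Prop :=
  match p with
  | Vert x => Rc x
  | Mid x a mu => edge x a /\ 0 < mu < 1
  end.

(* the semimetric of Delta^* ; iota(x,a) = x, tau(x,a) = xa *)
Definition dist (p q : point) : Rbar :=
  match p, q with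
  | Vert x, Vert y => dV x y
  | Mid x a mu, Vert y => Rbar_plus (Finite (1 - mu)) (dV (mmul M x a) y)
  | Vert x, Mid y b nu => Rbar_plus (dV x y) (Finite nu)
  | Mid x a mu, Mid y b nu =>
      if excluded_middle_informative (x = y /\ a = b /\ mu <= nu)
      then Finite (nu - mu)
      else Rbar_plus (dV (mmul M x a) y) (Finite (1 - mu + nu))
  end.

(* left translation action of (a representative s of) g in G(H) *)
Definition act (s : M) (p : point) : point :=
  match p with
  | Vert x => Vert (mmul M s x)
  | Mid x a mu => Mid (mmul M s x) a mu
  end.

Definition out_ball (x0 : point) (r : R) (p : point) : Prop :=
  in_space p /\ Rbar_le (dist x0 p) (Finite r).
Definition in_ball (x0 : point) (r : R) (p : point) : Prop :=
  in_space p /\ Rbar_le (dist p x0) (Finite r).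
Definition strong_ball (x0 : point) (r : R) (p : point) : Prop :=
  out_ball x0 r p /\ in_ball x0 r p.

Variable H : M -> Prop.

Definition acts_by_isometries : Prop :=
  forall s, Stab H s -> forall p q, in_space p -> in_space q ->
    in_space (act s p) /\ dist (act s p) (act s q) = dist p q.

(* for every out-ball B of finite radius, { g in G(H) : B meets gB } is finite:
   it is covered by the sigma-classes of finitely many elements of Stab(H) *)
Definition outward_proper : Prop :=
  forall x0 r, in_space x0 -> 0 <= r ->
    exists L : list M, (forall t, In t L -> Stab H t) /\
      forall s, Stab H s ->
        (exists q, out_ball x0 r q /\ out_ball x0 r (act s q)) ->
        exists t, In t L /\ sigma H s t.

Definition cocompact : Prop :=
  exists x0 r, in_space x0 /\ 0 <= r /\
    forall p, in_space p ->
      exists s, Stab H s /\ exists q, strong_ball x0 r q /\ p = act s q.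

Definition finitely_many_Hclasses : Prop :=
  exists L : list M, (forall y, In y L -> Rc y) /\
    forall x, Rc x -> exists y, In y L /\ Hrel x y.

End Green.

From Pilot Require Import Defs.
From Stdlib Require Import Reals List Lra Lia Classical ClassicalEpsilon.
From Coquelicot Require Import Coquelicot.
Open Scope R_scope.

(* For s in Stab(H), s h is L-related to h, so some u
   satisfies u s h = h and hence u s z = z on the whole R-class R = hM: left translation by s is
   a bijection of R commuting with right multiplication by generators, so it maps walks to walks
   and preserves the semimetric.  A point of an out-ball of radius r < N starts at one of the
   finitely many products of at most N generators read from the centre, and the σ-class of s
   is determined by its value on a single vertex of R (as H lies in wM for every w in R); so
   only finitely many classes move a point of the ball into the ball.  Finally the G(H)-orbit
   of a vertex is exactly its H-class, so a finite strong ball meets every orbit iff finitely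
   many H-classes cover R; for the converse, A generating M makes the graph on R strongly
   connected, which bounds the distances between the base point and finitely many
   representatives together with their out-neighbours. *)

Local Notation "x ** y" := (mmul _ x y) (at level 40, left associativity).

Lemma finite_witnesses {K T : Type} (Q : K -> T -> Prop) (F : list K) :
  exists L : list T, (forall t, In t L -> exists k, In k F /\ Q k t) /\
    forall k, In k F -> (exists t, Q k t) -> exists t, In t L /\ Q k t.
Proof.
  induction F as [|k F [L [HL HF]]].
  - exists nil. split; [intros t [] | intros k []].
  - destruct (classic (exists t, Q k t)) as [[t Ht]|Hno].
    + exists (t :: L). split.
      * intros t' [<-|Ht']; [exists k; split; [left|]; auto|].
        destruct (HL t' Ht') as [k' [? ?]]. exists k'. split; [right|]; auto.
      * intros k' [<-|Hk'] Hex; [exists t; split; [left|]; auto|].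
        destruct (HF k' Hk' Hex) as [t' [? ?]]. exists t'. split; [right|]; auto.
    + exists L. split.
      * intros t' Ht'. destruct (HL t' Ht') as [k' [? ?]]. exists k'. split; [right|]; auto.
      * intros k' [<-|Hk'] Hex; [contradiction|]. apply HF; auto.
Qed.

Lemma Rbar_plus_Finite_le_l (d : Rbar) (c r : R) :
  0 <= c -> Rbar_le (Rbar_plus (Finite c) d) (Finite r) -> Rbar_le d (Finite r).
Proof. destruct d; simpl; auto; lra. Qed.

Lemma Rbar_plus_Finite_le_r (d : Rbar) (c r : R) :
  0 <= c -> Rbar_le (Rbar_plus d (Finite c)) (Finite r) -> Rbar_le d (Finite r).
Proof. destruct d; simpl; auto; lra. Qed.

Section GreenRelations.
Variable M : monoid.

Lemma Rrel_iff (x y : M) :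
  Rrel M x y <-> (exists m, x = y ** m) /\ (exists m, y = x ** m).
Proof.
  split.
  - intros HR. split.
    + apply (HR x). exists (mone M). now rewrite mmulm1.
    + apply (HR y). exists (mone M). now rewrite mmulm1.
  - intros [[m1 ->] [m2 E2]] z; split; intros [m ->].
    + exists (m1 ** m). now rewrite mmulA.
    + exists (m2 ** m). rewrite E2 at 1. now rewrite !mmulA.
Qed.

Lemma Lrel_iff (x y : M) :
  Lrel M x y <-> (exists m, x = m ** y) /\ (exists m, y = m ** x).
Proof.
  split.
  - intros HL. split.
    + apply (HL x). exists (mone M). now rewrite mmul1m.
    + apply (HL y). exists (mone M). now rewrite mmul1m.
  - intros [[m1 ->] [m2 E2]] z; split; intros [m ->].
    + exists (m ** m1). now rewrite mmulA.
    + exists (m ** m2). rewrite E2 at 1. now rewrite !mmulA.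
Qed.

Lemma Rrel_sym (x y : M) : Rrel M x y -> Rrel M y x.
Proof. intros HR z. specialize (HR z). tauto. Qed.

Lemma Rrel_trans (x y z : M) : Rrel M x y -> Rrel M y z -> Rrel M x z.
Proof. intros H1 H2 w. specialize (H1 w). specialize (H2 w). tauto. Qed.

Lemma Lrel_sym (x y : M) : Lrel M x y -> Lrel M y x.
Proof. intros HL z. specialize (HL z). tauto. Qed.

Lemma Lrel_trans (x y z : M) : Lrel M x y -> Lrel M y z -> Lrel M x z.
Proof. intros H1 H2 w. specialize (H1 w). specialize (H2 w). tauto. Qed.

Lemma Hrel_sym (x y : M) : Hrel M x y -> Hrel M y x.
Proof. intros [HR HL]. split; [apply Rrel_sym | apply Lrel_sym]; assumption. Qed.

Lemma Hrel_trans (x y z : M) : Hrel M x y -> Hrel M y z -> Hrel M x z.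
Proof.
  intros [R1 L1] [R2 L2]. split; [eapply Rrel_trans | eapply Lrel_trans]; eassumption.
Qed.

Lemma Rrel_mull (p x y : M) : Rrel M x y -> Rrel M (p ** x) (p ** y).
Proof.
  rewrite !Rrel_iff. intros [[m1 ->] [m2 E2]]. split.
  - exists m1. now rewrite mmulA.
  - exists m2. rewrite E2 at 1. now rewrite mmulA.
Qed.

Lemma Lrel_mulr (x y n : M) : Lrel M x y -> Lrel M (x ** n) (y ** n).
Proof.
  rewrite !Lrel_iff. intros [[m1 ->] [m2 E2]]. split.
  - exists m1. now rewrite mmulA.
  - exists m2. rewrite E2 at 1. now rewrite <- mmulA.
Qed.

Lemma Hclass_iff (H : M -> Prop) (h : M) :
  is_Hclass M H -> H h -> forall x, H x <-> Hrel M x h.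
Proof.
  intros [h0 HH0] Hh x. apply HH0 in Hh. rewrite HH0. split; intros Hx.
  - eapply Hrel_trans; [exact Hx | apply Hrel_sym, Hh].
  - eapply Hrel_trans; eassumption.
Qed.

End GreenRelations.

Definition src {M : monoid} (p : point M) : M :=
  match p with Vert x => x | Mid x _ _ => x end.

Definition tgt {M : monoid} (p : point M) : M :=
  match p with Vert x => x | Mid x a _ => x ** a end.

Section SchutzenbergerGraph.
Variables (M : monoid) (Rc : M -> Prop) (A : list M).

Lemma walk_mull (p : M) : (forall z, Rc z -> Rc (p ** z)) ->
  forall x y n, walk M Rc A x y n -> walk M Rc A (p ** x) (p ** y) n.
Proof.
  intros Hp x y n W. induction W as [x Hx | x a y n [Hx [Ha Hxa]] _ IH].
  - constructor. auto.
  - apply walkS with a.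
    + split; [auto | split; [exact Ha |]]. rewrite <- mmulA. auto.
    + rewrite <- mmulA. exact IH.
Qed.

Lemma dV_mull (s u : M) :
  (forall z, Rc z -> Rc (s ** z)) -> (forall z, Rc z -> Rc (u ** z)) ->
  (forall z, Rc z -> u ** (s ** z) = z) ->
  forall x y, Rc x -> Rc y -> dV M Rc A (s ** x) (s ** y) = dV M Rc A x y.
Proof.
  intros Hs Hu Hus x y Hx Hy. apply Glb_Rbar_eqset. intro r. split.
  - intros [n [W ->]]. exists n. split; [| reflexivity].
    apply (walk_mull u Hu) in W. now rewrite !Hus in W.
  - intros [n [W ->]]. exists n. split; [| reflexivity]. exact (walk_mull s Hs _ _ _ W).
Qed.

Lemma dV_le_walk (x y : M) (n : nat) :
  walk M Rc A x y n -> Rbar_le (dV M Rc A x y) (Finite (INR n)).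
Proof. intros W. apply (proj1 (Glb_Rbar_correct _)). exists n. auto. Qed.

Lemma walk_of_dV_lt (x y : M) (r : R) (N : nat) :
  Rbar_le (dV M Rc A x y) (Finite r) -> r < INR N ->
  exists n, (n < N)%nat /\ walk M Rc A x y n.
Proof.
  intros Hd Hr. apply NNPP. intros Hno.
  assert (Hlb : Rbar_le (Finite (INR N)) (dV M Rc A x y)).
  { apply (proj2 (Glb_Rbar_correct _)). intros d [n [W ->]]. simpl. apply le_INR.
    destruct (Nat.lt_ge_cases n N) as [Hn|Hn]; [exfalso; eauto | exact Hn]. }
  pose proof (Rbar_le_trans _ _ _ Hlb Hd). simpl in *. lra.
Qed.

Lemma src_act (s : M) (p : point M) : src (act M s p) = s ** src p.
Proof. destruct p; reflexivity. Qed.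

Lemma in_space_src (p : point M) : in_space M Rc A p -> Rc (src p).
Proof. destruct p as [x | x a mu]; [auto | intros [[Hx _] _]; exact Hx]. Qed.

Fixpoint reach (v : M) (n : nat) : list M :=
  match n with
  | O => v :: nil
  | S n' => v :: flat_map (fun a => reach (v ** a) n') A
  end.

Lemma reach_walk (v y : M) (n N : nat) :
  walk M Rc A v y n -> (n <= N)%nat -> In y (reach v N).
Proof.
  intros W. revert N. induction W as [x Hx | x a y n [Hx [Ha Hxa]] _ IH]; intros N HN.
  - destruct N; simpl; auto.
  - destruct N as [|N]; [lia|]. simpl. right. apply in_flat_map. exists a.
    split; [exact Ha | apply IH; lia].
Qed.

Lemma out_ball_src_reach (x0 q : point M) (r : R) (N : nat) :
  in_space M Rc A x0 -> out_ball M Rc A x0 r q -> r < INR N ->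
  In (src q) (src x0 :: reach (tgt x0) N).
Proof.
  intros H0 [Hq Hd] HN.
  assert (Hreach : forall y, Rbar_le (dV M Rc A (tgt x0) y) (Finite r) ->
            In y (src x0 :: reach (tgt x0) N)).
  { intros y Hy. destruct (walk_of_dV_lt _ _ _ _ Hy HN) as [n [Hn W]].
    right. apply (reach_walk _ _ n); [exact W | lia]. }
  destruct x0 as [v | x a mu]; destruct q as [y | y b nu]; simpl in *.
  - exact (Hreach y Hd).
  - destruct Hq as [_ Hnu]. apply Hreach, (Rbar_plus_Finite_le_r _ nu); [lra | exact Hd].
  - destruct H0 as [_ Hmu]. apply Hreach, (Rbar_plus_Finite_le_l _ (1 - mu)); [lra | exact Hd].
  - destruct H0 as [_ Hmu]. destruct Hq as [_ Hnu].
    destruct (excluded_middle_informative (x = y /\ a = b /\ mu <= nu)) as [[-> _]|_].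
    + now left.
    + apply Hreach, (Rbar_plus_Finite_le_r _ (1 - mu + nu)); [lra | exact Hd].
Qed.

Lemma strong_ball_vertex (v : M) (q : point M) (r : R) :
  in_space M Rc A q -> Rbar_le (dV M Rc A v (src q)) (Finite r) ->
  Rbar_le (dV M Rc A (tgt q) v) (Finite r) -> strong_ball M Rc A (Vert M v) (r + 1) q.
Proof.
  intros Hq Hout Hin.
  split; split; try exact Hq; destruct q as [y | y b nu]; cbn [in_space Defs.dist src tgt] in *.
  - apply (Rbar_le_trans _ _ _ Hout). simpl. lra.
  - destruct Hq as [_ Hnu].
    apply (Rbar_plus_le_compat _ _ (Finite nu) (Finite 1) Hout). simpl. lra.
  - apply (Rbar_le_trans _ _ _ Hin). simpl. lra.
  - destruct Hq as [_ Hnu]. rewrite Rplus_comm.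
    apply (Rbar_plus_le_compat (Finite (1 - nu)) (Finite 1) _ (Finite r)); [simpl; lra | exact Hin].
Qed.

End SchutzenbergerGraph.

Section SchutzenbergerAction.
Variables (M : monoid) (A : list M) (H Rc : M -> Prop) (h : M).
Hypothesis H_iff : forall x, H x <-> Hrel M x h.
Hypothesis Rc_iff : forall x, Rc x <-> Rrel M x h.

Lemma Rc_Rrel (x y : M) : Rc x -> Rc y -> Rrel M x y.
Proof. rewrite !Rc_iff. intros Hx Hy. eapply Rrel_trans; [exact Hx | apply Rrel_sym, Hy]. Qed.

Lemma Rc_Rrel_closed (x y : M) : Rc y -> Rrel M x y -> Rc x.
Proof. rewrite !Rc_iff. intros Hy Hxy. eapply Rrel_trans; eassumption. Qed.

Lemma Rc_of_H (x : M) : H x -> Rc x.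
Proof. rewrite H_iff, Rc_iff. intros [HR _]. exact HR. Qed.

Lemma Rc_mull (p c z : M) : Rc c -> Rc (p ** c) -> Rc z -> Rc (p ** z).
Proof.
  intros Hc Hpc Hz. apply (Rc_Rrel_closed _ _ Hpc), Rrel_mull, Rc_Rrel; assumption.
Qed.

Lemma H_base : H h.
Proof. apply H_iff. split; intro; tauto. Qed.

Lemma Rc_base : Rc h.
Proof. apply Rc_iff. intro; tauto. Qed.

Lemma Stab_Rclass_bijective (s : M) : Stab M H s ->
  exists u, (forall z, Rc z -> Rc (s ** z)) /\ (forall z, Rc z -> Rc (u ** z)) /\
    (forall z, Rc z -> u ** (s ** z) = z).
Proof.
  intros Hs.
  assert (Hsh : H (s ** h)) by (apply Hs; exists h; split; [apply H_base | reflexivity]).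
  assert (Rch := Rc_of_H _ H_base). assert (Rcsh := Rc_of_H _ Hsh).
  apply H_iff in Hsh. destruct Hsh as [_ Hsh]. apply Lrel_iff in Hsh.
  destruct Hsh as [_ [u Hu]].
  exists u. split; [|split].
  - intros z. apply (Rc_mull s h); assumption.
  - intros z. apply (Rc_mull u (s ** h)); [assumption | now rewrite <- Hu].
  - intros z Hz. destruct (proj1 (Rrel_iff _ _ _) (Rc_Rrel _ _ Hz Rch)) as [[m ->] _].
    now rewrite (mmulA _ s h m), mmulA, <- Hu.
Qed.

Lemma Stab_mul_Hrel (s y : M) : Stab M H s -> Rc y -> Hrel M (s ** y) y.
Proof.
  intros Hs Hy. destruct (Stab_Rclass_bijective s Hs) as [u [Hsr [_ Hus]]].
  split.
  - apply Rc_Rrel; auto.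
  - apply Lrel_iff. split; [exists s; reflexivity | exists u; now rewrite Hus].
Qed.

Lemma Hrel_mull_H (p x y : M) :
  Hrel M x y -> Rc y -> x = p ** y -> forall z, H z -> H (p ** z).
Proof.
  intros [HxyR HxyL] Hy Ex z Hz.
  destruct (proj1 (Rrel_iff _ _ _) (Rc_Rrel _ _ (Rc_of_H _ Hz) Hy)) as [[n En] _].
  apply H_iff. split.
  - apply Rc_iff, (Rc_Rrel_closed _ x).
    + apply (Rc_Rrel_closed _ y); [exact Hy | exact HxyR].
    + rewrite Ex. apply Rrel_mull, Rc_Rrel; [apply (Rc_of_H _ Hz) | exact Hy].
  - assert (Epz : p ** z = x ** n) by (now rewrite En, mmulA, <- Ex).
    rewrite Epz. eapply Lrel_trans; [apply Lrel_mulr, HxyL |].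
    rewrite <- En. apply H_iff, Hz.
Qed.

Lemma Hrel_Stab_mul (x y : M) :
  Hrel M x y -> Rc y -> exists s, Stab M H s /\ x = s ** y.
Proof.
  intros Hxy Hy.
  assert (Hx : Rc x) by (apply (Rc_Rrel_closed _ y); [exact Hy | apply Hxy]).
  destruct (proj1 (Lrel_iff _ _ _) (proj2 Hxy)) as [[p Ep] [p' Ep']].
  exists p. split; [| exact Ep].
  intro z. split.
  - intros [z' [Hz' ->]]. exact (Hrel_mull_H p x y Hxy Hy Ep z' Hz').
  - intros Hz. exists (p' ** z). split.
    + exact (Hrel_mull_H p' y x (Hrel_sym _ _ _ Hxy) Hx Ep' z Hz).
    + destruct (proj1 (Rrel_iff _ _ _) (Rc_Rrel _ _ (Rc_of_H _ Hz) Hx)) as [[n ->] _].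
      now rewrite (mmulA _ p' x n), <- Ep', mmulA, <- Ep.
Qed.

Lemma sigma_of_agree (w s t : M) : Rc w -> t ** w = s ** w -> Defs.sigma M H s t.
Proof.
  intros Hw E z Hz.
  destruct (proj1 (Rrel_iff _ _ _) (Rc_Rrel _ _ (Rc_of_H _ Hz) Hw)) as [[m ->] _].
  now rewrite !mmulA, E.
Qed.

Lemma edge_of_Stab_translate (s y a : M) :
  Stab M H s -> Rc y -> edge M Rc A (s ** y) a -> edge M Rc A y a.
Proof.
  intros Hs Hy [_ [Ha Hsya]]. split; [exact Hy | split; [exact Ha |]].
  destruct (Stab_Rclass_bijective s Hs) as [u [Hsr [_ Hus]]].
  assert (E := Rrel_mull _ u _ _ (Rc_Rrel _ _ Hsya (Hsr y Hy))).
  rewrite mmulA, (Hus y Hy) in E. exact (Rc_Rrel_closed _ _ Hy E).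
Qed.

Lemma Stab_acts_by_isometries : acts_by_isometries M Rc A H.
Proof.
  intros s Hst p q Hp Hq.
  destruct (Stab_Rclass_bijective s Hst) as [u [Hs [Hu Hus]]].
  assert (HdV := dV_mull M Rc A s u Hs Hu Hus).
  assert (Hedge : forall x a, edge M Rc A x a -> edge M Rc A (s ** x) a).
  { intros x a [Hx [Ha Hxa]]. split; [auto | split; [exact Ha | rewrite <- mmulA; auto]]. }
  destruct p as [x | x a mu]; destruct q as [y | y b nu];
    cbn [in_space Defs.dist act] in *.
  - split; auto.
  - destruct Hq as [[Hy _] _]. split; [auto | now rewrite HdV].
  - destruct Hp as [[Hx [Ha Hxa]] Hmu]. split; [split; [apply Hedge; repeat split | ]; auto |].
    now rewrite <- mmulA, HdV.
  - destruct Hp as [[Hx [Ha Hxa]] Hmu]. destruct Hq as [[Hy _] _].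
    split; [split; [apply Hedge; repeat split | ]; auto |].
    assert (Hinj : s ** x = s ** y <-> x = y).
    { split; [intros E; now rewrite <- (Hus x Hx), <- (Hus y Hy), E | intros ->; reflexivity]. }
    destruct (excluded_middle_informative (s ** x = s ** y /\ a = b /\ mu <= nu)) as [C1|C1];
      destruct (excluded_middle_informative (x = y /\ a = b /\ mu <= nu)) as [C2|C2];
      try reflexivity; try tauto.
    now rewrite <- mmulA, HdV.
Qed.

Lemma Stab_outward_proper : outward_proper M Rc A H.
Proof.
  intros x0 r H0 _.
  destruct (INR_archimed 1 r Rlt_0_1) as [N HN]. rewrite Rmult_1_r in HN.
  set (F := src x0 :: reach M A (tgt x0) N).
  destruct (finite_witnesses (fun ww' t => Stab M H t /\ t ** fst ww' = snd ww')
              (list_prod F F)) as [L [HL HF]].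
  exists L. split.
  - intros t Ht. destruct (HL t Ht) as [_ [_ [Hst _]]]. exact Hst.
  - intros s Hs [q [Bq Bsq]].
    assert (Fq := out_ball_src_reach M Rc A x0 q r N H0 Bq HN).
    assert (Fsq := out_ball_src_reach M Rc A x0 (act M s q) r N H0 Bsq HN).
    rewrite src_act in Fsq.
    destruct (HF (src q, s ** src q)) as [t [Ht [_ Htq]]].
    + apply in_prod; assumption.
    + exists s. split; [exact Hs | reflexivity].
    + exists t. split; [exact Ht |].
      apply (sigma_of_agree (src q)); [apply (in_space_src M Rc A), Bq | exact Htq].
Qed.

Lemma cocompact_finitely_many_Hclasses :
  cocompact M Rc A H -> finitely_many_Hclasses M Rc.
Proof.
  intros [x0 [r [H0 [_ Hcov]]]].
  destruct (INR_archimed 1 r Rlt_0_1) as [N HN]. rewrite Rmult_1_r in HN.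
  destruct (finite_witnesses (fun y t => Rc t /\ t = y) (src x0 :: reach M A (tgt x0) N))
    as [L [HL HF]].
  exists L. split.
  - intros t Ht. destruct (HL t Ht) as [_ [_ [Ht' _]]]. exact Ht'.
  - intros x Hx. destruct (Hcov (Vert M x) Hx) as [s [Hs [q [[Bq _] Eq]]]].
    destruct q as [y | y b nu]; cbn in Eq; [| discriminate]. injection Eq as Exy.
    assert (Hy : Rc y) by exact (proj1 Bq).
    destruct (HF y) as [t [Ht [_ ->]]].
    + exact (out_ball_src_reach M Rc A x0 (Vert M y) r N H0 Bq HN).
    + exists y. auto.
    + exists y. split; [exact Ht |]. rewrite Exy. apply Stab_mul_Hrel; assumption.
Qed.

Lemma walk_word (l : list M) (x : M) :
  (forall a, In a l -> In a A) -> Rc x ->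
  Rrel M (x ** fold_right (mmul M) (mone M) l) x ->
  walk M Rc A x (x ** fold_right (mmul M) (mone M) l) (length l).
Proof.
  intros Hl. revert x. induction l as [|a l IH]; intros x Hx Hrel; cbn [fold_right length] in *.
  - rewrite mmulm1. constructor. exact Hx.
  - set (f := fold_right (mmul M) (mone M) l) in *.
    assert (Hxa : Rrel M (x ** a) x).
    { destruct (proj1 (Rrel_iff _ _ _) Hrel) as [_ [m Em]].
      apply Rrel_iff. split; [exists a; reflexivity |].
      exists (f ** m). rewrite Em at 1. now rewrite !mmulA. }
    assert (Rxa : Rc (x ** a)) by exact (Rc_Rrel_closed _ _ Hx Hxa).
    apply walkS with a.
    + split; [exact Hx | split; [apply Hl; now left | exact Rxa]].
    + rewrite mmulA. apply IH; [intros b Hb; apply Hl; now right | exact Rxa |].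
      rewrite <- mmulA. eapply Rrel_trans; [exact Hrel | apply Rrel_sym, Hxa].
Qed.

Lemma Rc_strongly_connected (x y : M) : generated_by M A ->
  Rc x -> Rc y -> exists n, walk M Rc A x y n.
Proof.
  intros Hgen Hx Hy.
  destruct (proj1 (Rrel_iff _ _ _) (Rc_Rrel _ _ Hy Hx)) as [[m Em] _].
  destruct (Hgen m) as [l [Hl Eml]].
  exists (length l). rewrite Em, Eml. apply walk_word; [exact Hl | exact Hx |].
  rewrite <- Eml, <- Em. exact (Rc_Rrel _ _ Hy Hx).
Qed.

Lemma dV_bounded_on_list (K : list M) : generated_by M A ->
  exists r, 0 <= r /\ forall y, In y K -> Rc y ->
    Rbar_le (dV M Rc A h y) (Finite r) /\ Rbar_le (dV M Rc A y h) (Finite r).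
Proof.
  intros Hgen. induction K as [|y K [r [Hr HK]]].
  - exists 0. split; [lra | intros y []].
  - destruct (classic (Rc y)) as [Hy | Hy].
    2: { exists r. split; [exact Hr |]. intros z [<-|Hz] Hz'; [contradiction | auto]. }
    destruct (Rc_strongly_connected h y Hgen Rc_base Hy) as [n1 W1].
    destruct (Rc_strongly_connected y h Hgen Hy Rc_base) as [n2 W2].
    assert (P1 := pos_INR n1). assert (P2 := pos_INR n2).
    exists (r + INR n1 + INR n2). split; [lra |].
    intros z [<-|Hz] Hz'; [split | destruct (HK z Hz Hz') as [B1 B2]; split].
    + apply (Rbar_le_trans _ _ _ (dV_le_walk M Rc A _ _ _ W1)). simpl. lra.
    + apply (Rbar_le_trans _ _ _ (dV_le_walk M Rc A _ _ _ W2)). simpl. lra.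
    + apply (Rbar_le_trans _ _ _ B1). simpl. lra.
    + apply (Rbar_le_trans _ _ _ B2). simpl. lra.
Qed.

Lemma finitely_many_Hclasses_cocompact : generated_by M A ->
  finitely_many_Hclasses M Rc -> cocompact M Rc A H.
Proof.
  intros Hgen [L [HL Hcov]].
  destruct (dV_bounded_on_list (L ++ flat_map (fun y => map (mmul M y) A) L) Hgen)
    as [r [Hr Hbound]].
  exists (Vert M h), (r + 1). split; [exact Rc_base | split; [lra |]].
  intros p Hp.
  destruct (Hcov _ (in_space_src M Rc A p Hp)) as [y [Hy Hxy]].
  assert (Ry := HL y Hy).
  destruct (Hrel_Stab_mul _ _ Hxy Ry) as [s [Hs Es]].
  assert (By := Hbound y (in_or_app _ _ _ (or_introl Hy)) Ry).
  exists s. split; [exact Hs |].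
  destruct p as [x | x a mu]; cbn [src] in Es.
  - exists (Vert M y). split; [| now rewrite Es].
    apply strong_ball_vertex; [exact Ry | apply By | apply By].
  - destruct Hp as [Hxa Hmu]. rewrite Es in Hxa.
    assert (Hya := edge_of_Stab_translate s y a Hs Ry Hxa).
    exists (Mid M y a mu). split; [| now rewrite Es].
    apply strong_ball_vertex; [split; assumption | apply By |].
    apply Hbound; [| exact (proj2 (proj2 Hya))]. cbn [tgt].
    apply in_or_app. right. apply in_flat_map. exists y. split; [exact Hy | apply in_map, Hya].
Qed.

End SchutzenbergerAction.

Theorem theorem5p1 (M : monoid) (A : list M) (H Rc : M -> Prop) :
  generated_by M A ->
  is_Hclass M H ->
  Rclass_containing M H Rc ->
  acts_by_isometries M Rc A H /\
  outward_proper M Rc A H /\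
  (cocompact M Rc A H <-> finitely_many_Hclasses M Rc).
Proof.
  intros Hgen HHc [h [Hh Rc_iff]].
  assert (H_iff := Hclass_iff M H h HHc Hh).
  split; [| split; [| split]].
  - exact (Stab_acts_by_isometries M A H Rc h H_iff Rc_iff).
  - exact (Stab_outward_proper M A H Rc h H_iff Rc_iff).
  - exact (cocompact_finitely_many_Hclasses M A H Rc h H_iff Rc_iff).
  - exact (finitely_many_Hclasses_cocompact M A H Rc h H_iff Rc_iff Hgen).
Qed.
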